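(* Let $\mathcal F=(V,E)$ be a hypergraph with $|V|\ge2$ and $E\ne\emptyset$. Then $\mathcal F$ has an induced sub-hypergraph $\mathcal F'=(V',E')$ (i.e. $V'\subseteq V$ and $E'=\{e\in E:e\subseteq V'\}$) such that: (1) $|E'|/|V'|\ge|E|/|V|$; (2) every vertex $v\in V'$ has degree at least $\frac{|E'|}{2|V'|\log_2|V|}$ in $\mathcal F'$; (3) $|E'|>|E|/2$.
   Context: The degree of a vertex in a hypergraph is the number of edges containing it. *)

From mathcomp Require Import all_boot.
From Stdlib Require Import Reals.
Set Implicit Arguments. Unset Strict Implicit. Unset Printing Implicit Defensive.

Definition is_hypergraph (T : finType) (V : {set T}) (E : {set {set T}}) : Prop :=
  forall e, e \in E -> (e \subset V) /\ (e != set0).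

Definition induced_edges (T : finType) (E : {set {set T}}) (V' : {set T})
  : {set {set T}} := [set e in E | e \subset V'].

Definition degree (T : finType) (E : {set {set T}}) (v : T) : nat :=
  #|[set e in E | v \in e]|.

Definition log2 (x : R) : R := (ln x / ln 2)%R.

(* Greedily delete a vertex whose degree is below [|E'| / (2 |V'| log2 |V|)]
   while one exists.  The quantity [|E'| * w(|V'|)], where
   [w(k) = prod_(2 <= j <= k) (1 - 1 / (2 j log2 |V|))], never decreases along
   the way: deleting a low-degree vertex from a set of size [k] loses fewer than
   a fraction [1 / (2 k log2 |V|)] of the edges.  Since [k * w(k)] is
   nondecreasing in [k], the edge density cannot drop, and since
   [w(|V|) >= 1 - H / (2 log2 |V|) > 1/2] with [H = sum_(2 <= j <= |V|) 1/j
   <= ln |V|], more than half of the edges survive. *)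
From mathcomp Require Import all_boot.
From Stdlib Require Import Reals.
From mathcomp Require Import zify.
From Stdlib Require Import Lra Classical.
Set Implicit Arguments. Unset Strict Implicit. Unset Printing Implicit Defensive.

Open Scope R_scope.

Lemma ln_lt_sub1 (x : R) : 0 < x -> x <> 1 -> ln x < x - 1.
Proof.
move=> x_gt0 x_neq1.
have := exp_ineq1 _ (ln_neq_0 x x_neq1 x_gt0).
rewrite exp_ln //; lra.
Qed.

Lemma ln_le (x y : R) : 0 < x -> x <= y -> ln x <= ln y.
Proof.
move=> x_gt0 /Rle_lt_or_eq_dec [lt_xy | ->]; last exact: Rle_refl.
exact/Rlt_le/ln_increasing.
Qed.

Lemma log2_ge1 (x : R) : 2 <= x -> 1 <= log2 x.
Proof.
move=> x_ge2.
have ln2_gt0 : 0 < ln 2 by have := ln_lt_2; lra.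
have := ln_le Rlt_0_2 x_ge2.
rewrite /log2 -(Rdiv_diag (ln 2)); last lra.
by move=> ?; apply: Rmult_le_compat_r => //; apply/Rlt_le/Rinv_0_lt_compat.
Qed.

Lemma inv_succ_le_ln_diff (k : nat) : (0 < k)%nat ->
  / INR k.+1 <= ln (INR k.+1) - ln (INR k).
Proof.
move=> k_gt0.
have k_gt0R : 0 < INR k by apply/lt_0_INR/ltP.
rewrite S_INR.
have inv_gt0 : 0 < / (INR k + 1) by apply: Rinv_0_lt_compat; lra.
have q_eq : INR k / (INR k + 1) = 1 - / (INR k + 1) by field; lra.
have q_gt0 : 0 < INR k / (INR k + 1) by apply: Rdiv_lt_0_compat; lra.
have := ln_lt_sub1 q_gt0 ltac:(rewrite q_eq; lra).
rewrite ln_mult ?ln_Rinv //; lra.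
Qed.

Fixpoint harmonic_tail (k : nat) : R :=
  match k with
  | 0 | 1 => 0
  | k'.+1 => harmonic_tail k' + / INR k
  end.

Lemma harmonic_tailSS (k : nat) :
  harmonic_tail k.+2 = harmonic_tail k.+1 + / INR k.+2.
Proof. by []. Qed.

Lemma harmonic_tail_ge0 (k : nat) : 0 <= harmonic_tail k.
Proof.
elim: k => [|[|k] IH]; try by rewrite /=; lra.
rewrite harmonic_tailSS.
have : 0 < / INR k.+2 by apply/Rinv_0_lt_compat/lt_0_INR; lia.
lra.
Qed.

Lemma harmonic_tail_le_ln (k : nat) : (0 < k)%nat -> harmonic_tail k <= ln (INR k).
Proof.
elim: k => [//|[|k] IH] _; first by rewrite /= ln_1; lra.
have := IH isT; have := inv_succ_le_ln_diff (k := k.+1) isT.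
rewrite harmonic_tailSS; lra.
Qed.

Section PeelWeight.
Variable L : R.
Hypothesis L_ge_half : / 2 <= L.

Fixpoint peel_weight (k : nat) : R :=
  match k with
  | 0 | 1 => 1
  | k'.+1 => peel_weight k' * (1 - / (2 * INR k * L))
  end.

Lemma peel_weightSS (k : nat) :
  peel_weight k.+2 = peel_weight k.+1 * (1 - / (2 * INR k.+2 * L)).
Proof. by []. Qed.

Lemma peel_factor_bounds (k : nat) : (2 <= k)%nat ->
  0 < / (2 * INR k * L) <= / 2.
Proof.
move=> k_ge2.
have : 2 <= INR k by apply: (le_INR 2); apply/leP.
move=> kR_ge2; split; first by apply: Rinv_0_lt_compat; nra.
by apply: Rinv_le_contravar; nra.
Qed.

Lemma peel_weight_bounds (k : nat) : 0 < peel_weight k <= 1.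
Proof.
elim: k => [|[|k] IH]; try by rewrite /=; lra.
rewrite peel_weightSS.
have := peel_factor_bounds (k := k.+2) isT; case: IH; nra.
Qed.

Lemma peel_weight_mulr_nat_le (k j : nat) : (0 < k)%nat -> (k <= j)%nat ->
  peel_weight k * INR k <= peel_weight j * INR j.
Proof.
move=> k_gt0; elim: j => [|j IH]; first by lia.
rewrite leq_eqVlt ltnS => /orP [/eqP -> | le_kj]; first exact: Rle_refl.
apply: Rle_trans (IH le_kj) _.
case: j {IH} le_kj => [|j] le_kj; first by lia.
have w_gt0 := proj1 (peel_weight_bounds j.+1).
have jR_ge1 : 1 <= INR j.+1 by apply: (le_INR 1); apply/leP.
rewrite peel_weightSS [INR j.+2]S_INR.
have -> : peel_weight j.+1 * (1 - / (2 * (INR j.+1 + 1) * L)) * (INR j.+1 + 1)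
        = peel_weight j.+1 * (INR j.+1 + 1 - / (2 * L)) by field; lra.
have : / (2 * L) <= 1 by rewrite -Rinv_1; apply: Rinv_le_contravar; lra.
nra.
Qed.

Lemma peel_weight_ge (k : nat) : 1 - harmonic_tail k / (2 * L) <= peel_weight k.
Proof.
elim: k => [|[|k] IH]; try by rewrite /=; lra.
rewrite harmonic_tailSS peel_weightSS.
have [a_gt0 a_le_half] := peel_factor_bounds (k := k.+2) isT.
have h_ge0 := harmonic_tail_ge0 k.+1.
have -> : (harmonic_tail k.+1 + / INR k.+2) / (2 * L)
        = harmonic_tail k.+1 / (2 * L) + / (2 * INR k.+2 * L).
  by field; split; [lra | apply: not_0_INR].
have : 0 <= harmonic_tail k.+1 / (2 * L) by apply: Rle_mult_inv_pos; lra.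
nra.
Qed.

Lemma density_le_of_potential_le (m n m' n' : nat) :
  (0 < n')%nat -> (n' <= n)%nat ->
  INR m * peel_weight n <= INR m' * peel_weight n' ->
  INR m / INR n <= INR m' / INR n'.
Proof.
move=> n'_gt0 le_n'n pot.
have n'R_ge1 : 1 <= INR n' by apply: (le_INR 1); apply/leP.
have nR_ge1 : 1 <= INR n by apply: (le_INR 1); apply/leP; lia.
have mono := peel_weight_mulr_nat_le n'_gt0 le_n'n.
have [w_gt0 _] := peel_weight_bounds n.
have [w'_gt0 _] := peel_weight_bounds n'.
have m_ge0 := pos_INR m.
have cross : INR m * INR n' <= INR m' * INR n.
  apply: (Rmult_le_reg_r (peel_weight n')) => //; nra.
apply: (Rmult_le_reg_r (INR n * INR n')); first nra.
have -> : INR m / INR n * (INR n * INR n') = INR m * INR n' by field; lra.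
have -> : INR m' / INR n' * (INR n * INR n') = INR m' * INR n by field; lra.
exact: cross.
Qed.

End PeelWeight.

Lemma peel_weight_log2_gt_half (n : nat) : (2 <= n)%nat ->
  / 2 < peel_weight (log2 (INR n)) n.
Proof.
move=> n_ge2.
have nR_ge2 : 2 <= INR n by apply: (le_INR 2); apply/leP.
have ln2_gt0 : 0 < ln 2 by have := ln_lt_2; lra.
have lnn_ge := ln_le Rlt_0_2 nR_ge2.
have L_ge1 := log2_ge1 nR_ge2.
have ln2_lt1 : ln 2 < 1 by have := ln_lt_sub1 Rlt_0_2 ltac:(lra); lra.
have := peel_weight_ge (L := log2 (INR n)) ltac:(lra) n.
have : harmonic_tail n / (2 * log2 (INR n)) <= ln (INR n) / (2 * log2 (INR n)).
  apply: Rmult_le_compat_r; first by apply/Rlt_le/Rinv_0_lt_compat; lra.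
  by apply: harmonic_tail_le_ln; lia.
have -> : ln (INR n) / (2 * log2 (INR n)) = ln 2 / 2.
  by rewrite /log2; field; split; lra.
lra.
Qed.

Lemma half_lt_of_potential_le (m n m' n' : nat) : (0 < m)%nat -> (2 <= n)%nat ->
  INR m * peel_weight (log2 (INR n)) n <= INR m' * peel_weight (log2 (INR n)) n' ->
  INR m / 2 < INR m'.
Proof.
move=> m_gt0 n_ge2 pot.
have mR_gt0 : 0 < INR m by apply/lt_0_INR/ltP.
have L_ge1 : 1 <= log2 (INR n) by apply: log2_ge1; apply: (le_INR 2); apply/leP.
have half_lt := peel_weight_log2_gt_half n_ge2.
have [_ w'_le1] := peel_weight_bounds (L := log2 (INR n)) ltac:(lra) n'.
have := pos_INR m'; nra.
Qed.

Section Peeling.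
Variable T : finType.
Variable E : {set {set T}}.
Hypothesis edge_neq0 : forall e, e \in E -> e != set0.

Lemma induced_edgesD1 (W : {set T}) (v : T) : v \in W ->
  induced_edges E (W :\ v)
  = induced_edges E W :\: [set e in induced_edges E W | v \in e].
Proof.
move=> vW; apply/setP => e.
rewrite /induced_edges !inE subsetD1.
by case: (e \in E); case: (e \subset W); case: (v \in e).
Qed.

Lemma card_induced_edgesD1 (W : {set T}) (v : T) : v \in W ->
  #|induced_edges E (W :\ v)|
  = (#|induced_edges E W| - degree (induced_edges E W) v)%nat.
Proof.
move=> vW; rewrite induced_edgesD1 // cardsD /degree.
by rewrite (setIidPr _) //; apply/subsetP => e; rewrite inE => /andP [].
Qed.

Lemma degree_le_card (F : {set {set T}}) (v : T) : (degree F v <= #|F|)%nat.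
Proof. by apply: subset_leq_card; apply/subsetP => e; rewrite inE => /andP []. Qed.

Lemma degree_card1 (W : {set T}) (v : T) : v \in W -> #|W| = 1%nat ->
  degree (induced_edges E W) v = #|induced_edges E W|.
Proof.
move=> vW /eqP /cards1P [x W_eq]; apply: eq_card => e.
rewrite inE; case eW: (e \in _) => //=.
move: eW vW; rewrite inE W_eq inE => /andP [/edge_neq0 /set0Pn [y ye] /subsetP eW].
by move=> /eqP ->; move: (eW y ye); rewrite inE => /eqP <-.
Qed.

Lemma induced_edges_gt0_card (W : {set T}) :
  (0 < #|induced_edges E W|)%nat -> (0 < #|W|)%nat.
Proof.
rewrite !card_gt0 => /set0Pn [e]; rewrite inE => /andP [/edge_neq0 /set0Pn [x xe] eW].
by apply/set0Pn; exists x; apply: (subsetP eW).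
Qed.

Variable L : R.
Hypothesis L_ge_half : / 2 <= L.

Definition potential (W : {set T}) : R :=
  INR #|induced_edges E W| * peel_weight L #|W|.

Definition dense_min_degree (W : {set T}) : Prop :=
  forall v, v \in W ->
    INR (degree (induced_edges E W) v) >= INR #|induced_edges E W| / (2 * INR #|W| * L).

Lemma potential_le_delete_low_degree (W : {set T}) (v : T) :
  v \in W -> (2 <= #|W|)%nat ->
  INR (degree (induced_edges E W) v) < INR #|induced_edges E W| / (2 * INR #|W| * L) ->
  potential W <= potential (W :\ v).
Proof.
move=> vW W_ge2; rewrite /potential card_induced_edgesD1 // minus_INR; last first.
  exact/leP/degree_le_card.
have -> : #|W| = (#|W| - 2).+2 by lia.
have -> : #|W :\ v| = (#|W| - 2).+1 by move: (cardsD1 v W); rewrite vW; lia.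
move: (#|W| - 2)%nat => k.
have [a_gt0 _] := peel_factor_bounds L_ge_half (k := k.+2) isT.
have w_gt0 := proj1 (peel_weight_bounds L_ge_half k.+1).
rewrite peel_weightSS /Rdiv.
move: (INR _) (INR _) => m d low.
have : 0 < (m * / (2 * INR k.+2 * L) - d) * peel_weight L k.+1.
  by apply: Rmult_lt_0_compat; lra.
nra.
Qed.

Lemma exists_dense_min_degree_subset (W : {set T}) :
  exists2 W' : {set T}, W' \subset W & potential W <= potential W' /\ dense_min_degree W'.
Proof.
have [n] := ubnP #|W|; elim: n W => // n IH W W_lt.
have [[v [vW low]] | no_low] :=
  classic (exists v, v \in W /\
    INR (degree (induced_edges E W) v) < INR #|induced_edges E W| / (2 * INR #|W| * L)).
  have [W_eq1 | W_ge2] : #|W| = 1%nat \/ (2 <= #|W|)%nat.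
    by move: (cardsD1 v W); rewrite vW; lia.
  - exfalso; move: low; rewrite degree_card1 // W_eq1 /Rdiv.
    have := pos_INR #|induced_edges E W|.
    have : / (2 * INR 1 * L) <= 1.
      by rewrite -Rinv_1; apply: Rinv_le_contravar; rewrite /=; lra.
    nra.
  - have [|W' W'_sub [pot dense]] := IH (W :\ v).
      by move: (cardsD1 v W); rewrite vW; lia.
    exists W'; first exact: subset_trans W'_sub (subsetDl _ _).
    split=> //; apply: Rle_trans pot.
    exact: potential_le_delete_low_degree.
exists W => //; split; first exact: Rle_refl.
move=> v vW; apply: Rnot_lt_ge => low; apply: no_low; by exists v.
Qed.

End Peeling.

Lemma induced_edges_id (T : finType) (V : {set T}) (E : {set {set T}}) :
  is_hypergraph V E -> induced_edges E V = E.
Proof.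
move=> hyp; apply/setP => e; rewrite inE.
by case eE: (e \in E); rewrite // (proj1 (hyp e eE)).
Qed.

Close Scope R_scope.

Theorem lemma2p1 (T : finType) (V : {set T}) (E : {set {set T}}) :
  is_hypergraph V E ->
  (2 <= #|V|)%N ->
  E != set0 ->
  exists V' : {set T},
    let E' := induced_edges E V' in
    [/\ V' \subset V,
        (0 < #|V'|)%N,
        (INR #|E'| / INR #|V'| >= INR #|E| / INR #|V|)%R,
        (forall v, v \in V' ->
           (INR (degree E' v) >= INR #|E'| / (2 * INR #|V'| * log2 (INR #|V|)))%R)
      & (INR #|E'| > INR #|E| / 2)%R].
Proof.
move=> hyp V_ge2 E_neq0.
have edge_neq0 e : e \in E -> e != set0 by move=> /hyp [].
have L_ge1 : (1 <= log2 (INR #|V|))%R.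
  by apply: log2_ge1; apply: (le_INR 2); apply/leP.
have L_ge_half : (/ 2 <= log2 (INR #|V|))%R by lra.
have [W W_sub [pot dense]] := exists_dense_min_degree_subset edge_neq0 L_ge_half V.
move: pot; rewrite /potential induced_edges_id // => pot.
have half_lt := half_lt_of_potential_le (m := #|E|) ltac:(by rewrite card_gt0) V_ge2 pot.
have E'_gt0 : (0 < #|induced_edges E W|)%N.
  apply/ltP/INR_lt; have := pos_INR #|E|; change (INR 0) with 0%R; lra.
have W_gt0 := induced_edges_gt0_card edge_neq0 E'_gt0.
exists W; split=> //.
exact/Rle_ge/(density_le_of_potential_le L_ge_half W_gt0 (subset_leq_card W_sub) pot).
Qed.
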